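(* Let $X$ be a metric space. (1) If $f_0,f_1\in\mathrm{E}'(X)$ and $\lambda\in(0,1)$, then $f:=(1-\lambda)f_0+\lambda f_1\in\Delta(X)$ and $A(f)=A(f_0)\cap A(f_1)$; so $f\in\mathrm{E}'(X)$ if and only if $\bigcup(A(f_0)\cap A(f_1))=X$. (2) For $A_0,A_1\in\mathscr{A}(X)$ the following are equivalent: (i) $P(A_0)\cup P(A_1)\subset P(A)$ for some $A\in\mathscr A(X)$; (ii) $\bigcup(A_0\cap A_1)=X$; (iii) $A_0\cap A_1\in\mathscr A(X)$. If (i)–(iii) hold and $A\in\mathscr A(X)$ is as in (i), then $P(A_0)\cup P(A_1)\subset P(A_0\cap A_1)\subset P(A)$.
   Context: For $f\colon X\to\mathbb{R}$, $A(f)$ is the set of unordered pairs $\{x,y\}$ ($x=y$ allowed) with $f(x)+f(y)=d(x,y)$. $\Delta(X)=\{f\in\mathbb R^X: f(x)+f(y)\ge d(x,y)\ \forall x,y\}$; $\mathrm{E}'(X)=\{f\in\Delta(X):\bigcup A(f)=X\}$; $\mathscr A(X)=\{A(f): f\in\mathrm{E}'(X)\}$; for $A\in\mathscr A(X)$, $H(A)=\{g\in\mathbb{R}^X: g(x)+g(y)=d(x,y)\ \forall \{x,y\}\in A\}$ and $P(A)=\mathrm{E}'(X)\cap H(A)=\{g\in\mathrm{E}'(X): A\subset A(g)\}$. *)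

From Stdlib Require Export Reals.
Open Scope R_scope.

Section Defs.
Variable X : Type.
Variable d : X -> X -> R.

Definition is_metric : Prop :=
  (forall x y, 0 <= d x y) /\
  (forall x y, d x y = 0 <-> x = y) /\
  (forall x y, d x y = d y x) /\
  (forall x y z, d x z <= d x y + d y z).

(* A set of unordered pairs {x,y} (x = y allowed) is represented as a
   relation A : X -> X -> Prop, {x,y} ∈ A being A x y. *)
Definition pairset := X -> X -> Prop.

Definition Aset (f : X -> R) : pairset := fun x y => f x + f y = d x y.

Definition DeltaX (f : X -> R) : Prop := forall x y, f x + f y >= d x y.

Definition cup (A : pairset) (x : X) : Prop := exists y, A x y.

Definition pairI (A B : pairset) : pairset := fun x y => A x y /\ B x y.

Definition Eprime (f : X -> R) : Prop := DeltaX f /\ forall x, cup (Aset f) x.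

Definition scrA (A : pairset) : Prop :=
  exists f, Eprime f /\ forall x y, A x y <-> Aset f x y.

Definition Hset (A : pairset) (g : X -> R) : Prop :=
  forall x y, A x y -> g x + g y = d x y.

Definition Pset (A : pairset) (g : X -> R) : Prop := Eprime g /\ Hset A g.

End Defs.
Arguments is_metric {X} d.
Arguments Aset {X} d f _ _.
Arguments DeltaX {X} d f.
Arguments cup {X} A x.
Arguments pairI {X} A B _ _.
Arguments Eprime {X} d f.
Arguments scrA {X} d A.
Arguments Hset {X} d A g.
Arguments Pset {X} d A g.

(* For f0, f1 in Δ(X) the slack functions s_i(x,y) = f_i x + f_i y - d x y are
   nonnegative, and the slack of (1-λ) f0 + λ f1 is (1-λ) s0 + λ s1; with both
   weights positive it vanishes exactly where s0 and s1 both vanish, i.e.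
   A(f) = A(f0) ∩ A(f1).  For part (2), the inclusion P(A_i) ⊂ P(A) applied to
   a function f_i with A(f_i) = A_i forces A ⊂ A_i, so A ⊂ A0 ∩ A1 and every x
   lies in a pair of A0 ∩ A1; conversely, if A0 ∩ A1 covers X, the midpoint of
   f0 and f1 witnesses A0 ∩ A1 ∈ 𝒜(X) by part (1), and P is antitone. *)
From Stdlib Require Import Reals Lra Psatz.
Open Scope R_scope.

Section AffinePairs.

Variables (X : Type) (d : X -> X -> R).

Lemma DeltaX_convex (f0 f1 : X -> R) (lam : R) :
  DeltaX d f0 -> DeltaX d f1 -> 0 <= lam <= 1 ->
  DeltaX d (fun x => (1 - lam) * f0 x + lam * f1 x).
Proof. intros D0 D1 Hl x y; specialize (D0 x y); specialize (D1 x y); nra. Qed.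

Lemma Aset_convex (f0 f1 : X -> R) (lam : R) :
  DeltaX d f0 -> DeltaX d f1 -> 0 < lam < 1 ->
  forall x y, Aset d (fun x => (1 - lam) * f0 x + lam * f1 x) x y <->
              pairI (Aset d f0) (Aset d f1) x y.
Proof.
  intros D0 D1 Hl x y; specialize (D0 x y); specialize (D1 x y).
  unfold Aset, pairI; split.
  - intro H; split; nra.
  - intros [H0 H1]; nra.
Qed.

Lemma cup_mono (A B : pairset X) :
  (forall x y, A x y -> B x y) -> forall x, cup A x -> cup B x.
Proof. intros AB x [y Hy]; exists y; auto. Qed.

Lemma Eprime_iff_cup (f : X -> R) (A : pairset X) :
  DeltaX d f -> (forall x y, Aset d f x y <-> A x y) ->
  Eprime d f <-> forall x, cup A x.
Proof.
  intros D HA; split.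
  - intros [_ C] x; apply (cup_mono (Aset d f)); [apply HA | apply C].
  - intros C; split; [exact D |]; intro x.
    apply (cup_mono A); [apply HA | apply C].
Qed.

Lemma scrA_cup (A : pairset X) : scrA d A -> forall x, cup A x.
Proof.
  intros [f [[_ C] HA]] x; apply (cup_mono (Aset d f)); [apply HA | apply C].
Qed.

Lemma Pset_antitone (A B : pairset X) (g : X -> R) :
  (forall x y, B x y -> A x y) -> Pset d A g -> Pset d B g.
Proof. intros BA [E H]; split; [exact E |]; intros x y h; apply H, BA, h. Qed.

Lemma Pset_pairI (A0 A1 : pairset X) (g : X -> R) :
  Pset d A0 g \/ Pset d A1 g -> Pset d (pairI A0 A1) g.
Proof.
  intros [P | P]; revert P; apply Pset_antitone; intros x y h; apply h.
Qed.

Lemma scrA_Pset_incl (A0 A : pairset X) :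
  scrA d A0 -> (forall g, Pset d A0 g -> Pset d A g) ->
  forall x y, A x y -> A0 x y.
Proof.
  intros [f [E HA0]] PA x y h.
  assert (Pf : Pset d A0 f) by (split; [exact E | intros u v; apply HA0]).
  apply HA0, (proj2 (PA f Pf)), h.
Qed.

Lemma scrA_pairI (A0 A1 : pairset X) :
  scrA d A0 -> scrA d A1 -> (forall x, cup (pairI A0 A1) x) ->
  scrA d (pairI A0 A1).
Proof.
  intros [f0 [[D0 _] H0]] [f1 [[D1 _] H1]] C.
  assert (Hl : 0 < 1 / 2 < 1) by lra.
  assert (D : DeltaX d (fun x => (1 - 1 / 2) * f0 x + 1 / 2 * f1 x))
    by (apply DeltaX_convex; auto; lra).
  assert (HA : forall x y,
      Aset d (fun x => (1 - 1 / 2) * f0 x + 1 / 2 * f1 x) x y <-> pairI A0 A1 x y).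
  { intros x y; rewrite (Aset_convex _ _ _ D0 D1 Hl); unfold pairI.
    rewrite H0, H1; tauto. }
  eexists; split.
  - apply (Eprime_iff_cup _ _ D HA), C.
  - intros x y; symmetry; apply HA.
Qed.

End AffinePairs.

Theorem proposition4p2 (X : Type) (d : X -> X -> R) (hd : is_metric d) :
  (* (1) *)
  (forall (f0 f1 : X -> R) (lam : R),
      Eprime d f0 -> Eprime d f1 -> 0 < lam < 1 ->
      let f := fun x => (1 - lam) * f0 x + lam * f1 x in
      DeltaX d f /\
      (forall x y, Aset d f x y <-> pairI (Aset d f0) (Aset d f1) x y) /\
      (Eprime d f <-> forall x, cup (pairI (Aset d f0) (Aset d f1)) x)) /\
  (* (2) *)
  (forall A0 A1 : pairset X,
      scrA d A0 -> scrA d A1 ->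
      ((exists A, scrA d A /\
          forall g, Pset d A0 g \/ Pset d A1 g -> Pset d A g)
        <-> (forall x, cup (pairI A0 A1) x)) /\
      ((forall x, cup (pairI A0 A1) x) <-> scrA d (pairI A0 A1)) /\
      (forall A, scrA d A ->
         (forall g, Pset d A0 g \/ Pset d A1 g -> Pset d A g) ->
         (forall g, Pset d A0 g \/ Pset d A1 g -> Pset d (pairI A0 A1) g) /\
         (forall g, Pset d (pairI A0 A1) g -> Pset d A g))).
Proof.
  split.
  - intros f0 f1 lam [D0 _] [D1 _] Hl f.
    assert (Df : DeltaX d f) by (apply DeltaX_convex; auto; lra).
    pose proof (Aset_convex X d f0 f1 lam D0 D1 Hl) as HA.
    split; [exact Df | split; [exact HA | exact (Eprime_iff_cup X d f _ Df HA)]].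
  - intros A0 A1 S0 S1.
    assert (Incl : forall A, (forall g, Pset d A0 g \/ Pset d A1 g -> Pset d A g) ->
                   forall x y, A x y -> pairI A0 A1 x y).
    { intros A PA x y h; split.
      - apply (scrA_Pset_incl X d A0 A S0 (fun g P => PA g (or_introl P)) x y h).
      - apply (scrA_Pset_incl X d A1 A S1 (fun g P => PA g (or_intror P)) x y h). }
    split; [split | split; [split | ]].
    + intros [A [SA PA]] x; apply (cup_mono X A); [apply Incl, PA | apply (scrA_cup X d), SA].
    + intros C; exists (pairI A0 A1); split;
        [apply scrA_pairI; auto | apply Pset_pairI].
    + apply scrA_pairI; auto.
    + apply scrA_cup.
    + intros A _ PA; split; [apply Pset_pairI |].
      intro g; apply Pset_antitone, Incl, PA.
Qed.
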